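(* Let $K$ be a solid cone in a vector space with convergence $(Y,\to)$. Then its interior $K^\circ$ satisfies: (i) $\lambda K^\circ\subseteq K^\circ$ for every $\lambda>0$; (ii) $K+K^\circ\subseteq K^\circ$; (iii) $0\notin K^\circ$. Conversely, if $V$ is a nonempty open subset of $K$ satisfying (i)–(iii) (with $K^\circ$ replaced by $V$), then $V$ is the interior of $K$.
   Context: Vector space with convergence: a real vector space $Y$ with a relation $\to$ between sequences in $Y$ and points of $Y$ (write $x_n\to x$; uniqueness of limits not assumed) such that (C1) $x_n\to x$, $y_n\to y$ imply $x_n+y_n\to x+y$; (C2) $x_n\to x$, $\lambda\in\mathbb R$ imply $\lambda x_n\to\lambda x$; (C3) $\lambda_n\to\lambda$ in $\mathbb R$, $x\in Y$ imply $\lambda_n x\to\lambda x$. A set $A\subseteq Y$ is open if $x_n\to x\in A$ implies $x_n\in A$ for all but finitely many $n$; closed if $x_n\to x$ and $x_n\in A$ for all $n$ imply $x\in A$. The interior $A^\circ$ is the union of all open subsets of $Y$ contained in $A$. A cone is a nonempty closed $K\subseteq Y$ with $\lambda K\subseteq K$ for all $\lambda\ge0$, $K+K\subseteq K$, $K\cap(-K)=\{0\}$; it is solid if $K\neq\{0\}$ and $K^\circ\neq\emptyset$. *)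

From HB Require Import structures.
From mathcomp Require Import all_boot all_order all_algebra.
From mathcomp Require Import reals.
Set Implicit Arguments. Unset Strict Implicit. Unset Printing Implicit Defensive.
Import Order.TTheory GRing.Theory Num.Theory.
Local Open Scope ring_scope.

Definition real_conv (R : realType) (l : nat -> R) (a : R) : Prop :=
  forall e : R, 0 < e -> exists N : nat, forall n : nat, (N <= n)%N -> `|l n - a| < e.

Definition is_convergence (R : realType) (Y : lmodType R)
    (conv : (nat -> Y) -> Y -> Prop) : Prop :=
  [/\ (forall (x y : nat -> Y) (a b : Y), conv x a -> conv y b ->
         conv (fun n => x n + y n) (a + b)),
      (forall (x : nat -> Y) (a : Y) (lam : R), conv x a ->
         conv (fun n => lam *: x n) (lam *: a)) &
      (forall (lam : nat -> R) (l : R) (x : Y), real_conv lam l ->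
         conv (fun n => lam n *: x) (l *: x))].

Section Conv.
Variables (R : realType) (Y : lmodType R) (conv : (nat -> Y) -> Y -> Prop).

Definition cv_open (A : Y -> Prop) : Prop :=
  forall (x : nat -> Y) (a : Y), conv x a -> A a ->
    exists N : nat, forall n : nat, (N <= n)%N -> A (x n).

Definition cv_closed (A : Y -> Prop) : Prop :=
  forall (x : nat -> Y) (a : Y), conv x a -> (forall n, A (x n)) -> A a.

Definition cv_interior (A : Y -> Prop) : Y -> Prop :=
  fun y => exists U : Y -> Prop, [/\ cv_open U, (forall z, U z -> A z) & U y].

Definition is_cone (K : Y -> Prop) : Prop :=
  [/\ exists y, K y,
      cv_closed K,
      (forall (lam : R) (y : Y), 0 <= lam -> K y -> K (lam *: y)),
      (forall y z : Y, K y -> K z -> K (y + z)) &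
      (forall y : Y, K y /\ K (- y) <-> y = 0)].

Definition is_solid_cone (K : Y -> Prop) : Prop :=
  [/\ is_cone K, (exists y, K y /\ y <> 0) & (exists y, cv_interior K y)].

Definition interior_props (K V : Y -> Prop) : Prop :=
  [/\ (forall (lam : R) (y : Y), 0 < lam -> V y -> V (lam *: y)),
      (forall y z : Y, K y -> V z -> V (y + z)) &
      ~ V 0].
End Conv.

From HB Require Import structures.
From mathcomp Require Import all_boot all_order all_algebra.
From mathcomp Require Import reals.
From Stdlib Require Import FunctionalExtensionality.
Import Order.TTheory GRing.Theory Num.Theory.
Local Open Scope ring_scope.

(* The interior of a cone is stable under positive scalings and translations by
   elements of K because these maps are sequential homeomorphisms of Y mapping K
   into itself.  Since (n+1)^-1 w -> 0 by (C3), every open set containing y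
   contains some y - t w with t > 0.  Taking y = 0 and w a nonzero element of K
   this puts -t w in K, contradicting K /\ -K = {0}; taking y in K° and w in a
   nonempty V satisfying (i), (ii) gives y = (y - t w) + t w in V. *)

Lemma real_conv_inv_succ (R : realType) : real_conv (fun n : nat => (n.+1%:R : R)^-1) 0.
Proof.
move=> e e_gt0.
have inve_ge0 : 0 <= e^-1 by rewrite invr_ge0 ltW.
exists (Num.Def.archi_bound e^-1) => n le_bound_n.
rewrite subr0 ger0_norm ?invr_ge0 ?ler0n //.
have lt_inve_n : e^-1 < n.+1%:R.
  apply: (lt_le_trans (archi_boundP inve_ge0)).
  by rewrite ler_nat (leq_trans le_bound_n).
by rewrite -[e]invrK ltf_pV2 // ?posrE ?invr_gt0 ?ltr0n.
Qed.

Section ConvergenceSpace.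
Variables (R : realType) (Y : lmodType R) (conv : (nat -> Y) -> Y -> Prop).
Hypothesis convY : is_convergence conv.

Lemma conv_cst (c : Y) : conv (fun _ => c) c.
Proof.
case: convY => _ _ conv_scalel.
have := conv_scalel (fun _ => 1) 1 c.
have -> : (fun _ : nat => (1 : R) *: c) = (fun _ => c).
  by apply: functional_extensionality => n; rewrite scale1r.
rewrite scale1r; apply=> e e_gt0; exists 0%N => n _.
by rewrite subrr normr0.
Qed.

Lemma conv_addr_inv_succ (y w : Y) : conv (fun n => y + (n.+1%:R : R)^-1 *: w) y.
Proof.
case: convY => conv_add _ conv_scalel.
have := conv_add _ _ _ _ (conv_cst y) (conv_scalel _ _ w (real_conv_inv_succ R)).
by rewrite scale0r addr0.
Qed.

Lemma cv_open_preimage (f : Y -> Y) (U : Y -> Prop) :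
  (forall x a, conv x a -> conv (fun n => f (x n)) (f a)) ->
  cv_open conv U -> cv_open conv (fun z => U (f z)).
Proof. by move=> f_cont openU x a /f_cont; apply: openU. Qed.

Lemma cv_open_scale (lam : R) (U : Y -> Prop) :
  cv_open conv U -> cv_open conv (fun z => U (lam *: z)).
Proof. by case: convY => _ conv_scaler _; apply: cv_open_preimage => x a /conv_scaler. Qed.

Lemma cv_open_translate (c : Y) (U : Y -> Prop) :
  cv_open conv U -> cv_open conv (fun z => U (z + c)).
Proof.
case: convY => conv_add _ _; apply: cv_open_preimage => x a conv_x.
exact: conv_add _ _ _ _ conv_x (conv_cst c).
Qed.

Lemma cv_open_subr_small (U : Y -> Prop) (y w : Y) :
  cv_open conv U -> U y -> exists2 t : R, 0 < t & U (y - t *: w).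
Proof.
move=> openU Uy.
have [N UN] := openU _ _ (conv_addr_inv_succ y (- w)) Uy.
exists (N.+1%:R^-1); first by rewrite invr_gt0 ltr0n.
by rewrite -scalerN; apply: UN.
Qed.

Variable K : Y -> Prop.
Hypothesis K_scale : forall (lam : R) (y : Y), 0 <= lam -> K y -> K (lam *: y).
Hypothesis K_add : forall y z : Y, K y -> K z -> K (y + z).

Lemma cv_interior_scale (lam : R) (y : Y) :
  0 < lam -> cv_interior conv K y -> cv_interior conv K (lam *: y).
Proof.
move=> lam_gt0 [U [openU subUK Uy]].
have lam_neq0 : lam != 0 by rewrite gt_eqF.
exists (fun z => U (lam^-1 *: z)); split.
- exact: cv_open_scale.
- move=> z /subUK /(K_scale lam _ (ltW lam_gt0)).
  by rewrite scalerA divff // scale1r.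
- by rewrite scalerA mulVf // scale1r.
Qed.

Lemma cv_interior_addl (y z : Y) :
  K y -> cv_interior conv K z -> cv_interior conv K (y + z).
Proof.
move=> Ky [U [openU subUK Uz]].
exists (fun w => U (w + - y)); split.
- exact: cv_open_translate.
- by move=> w /subUK /(K_add _ _ Ky); rewrite addrC subrK.
- by rewrite addrC addKr.
Qed.

Lemma cv_interior0 (y0 : Y) :
  K y0 -> y0 <> 0 -> (forall y, K y /\ K (- y) <-> y = 0) ->
  ~ cv_interior conv K 0.
Proof.
move=> Ky0 y0_neq0 K_pointed [U [openU subUK U0]].
have [t t_gt0 Ut] := cv_open_subr_small _ _ y0 openU U0.
have Kty0 : K (- y0).
  have invt_ge0 : 0 <= t^-1 by rewrite invr_ge0 ltW.
  have := K_scale _ _ invt_ge0 (subUK _ Ut).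
  by rewrite add0r scalerN scalerA mulVf ?gt_eqF // scale1r.
by apply: y0_neq0; apply/K_pointed.
Qed.

Lemma cv_interior_eq_open (V : Y -> Prop) :
  (exists v, V v) -> cv_open conv V -> (forall y, V y -> K y) ->
  (forall (lam : R) (y : Y), 0 < lam -> V y -> V (lam *: y)) ->
  (forall y z : Y, K y -> V z -> V (y + z)) ->
  forall y, V y <-> cv_interior conv K y.
Proof.
move=> [v Vv] openV subVK V_scale V_addl y; split; first by exists V.
move=> [U [openU subUK Uy]].
have [t t_gt0 Ut] := cv_open_subr_small _ _ v openU Uy.
have := V_addl _ _ (subUK _ Ut) (V_scale _ _ t_gt0 Vv).
by rewrite subrK.
Qed.

End ConvergenceSpace.

Theorem theorem3p3 (R : realType) (Y : lmodType R)
    (conv : (nat -> Y) -> Y -> Prop) (K : Y -> Prop) :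
  is_convergence conv -> is_solid_cone conv K ->
  interior_props K (cv_interior conv K) /\
  (forall V : Y -> Prop,
     (exists y, V y) -> cv_open conv V -> (forall y, V y -> K y) ->
     interior_props K V ->
     forall y, V y <-> cv_interior conv K y).
Proof.
move=> convY [[_ _ K_scale K_add K_pointed] [y0 [Ky0 y0_neq0]] _].
split.
  split.
  - exact: cv_interior_scale.
  - exact: cv_interior_addl.
  - exact: cv_interior0 Ky0 y0_neq0 K_pointed.
move=> V V_nonempty openV subVK [V_scale V_addl _].
exact: cv_interior_eq_open.
Qed.
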